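(* Let $s\ge 1$ be an integer and let $D$ be a normalized difference set in an abelian group $G$ with parameters \[ (v,k,\lambda)=\left((2^s+1)(2^{2s}+1),\,2^{2s}+2^s+1,\,2^s+1\right). \] Let $H$ and $K$ be the subgroups of $G$ of orders $2^s+1$ and $2^{2s}+1$ respectively, so that $G=HK$ is their direct product. Then $H\subseteq D$ and $|D\cap Hx|=1$ for each coset $Hx\neq H$ of $H$. Furthermore $D\cap K=\{1\}$ and $|D\cap Kx|=2^s+1$ for each coset $Kx\neq K$ of $K$.
   Context: A $(v,k,\lambda)$-difference set in an abelian group $G$ of order $v$ is a $k$-subset $D$ such that every non-identity element of $G$ is of the form $d_1d_2^{-1}$ with $d_1,d_2\in D$ in exactly $\lambda$ ways. It is normalized if $\prod_{d\in D}d=1$. *)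

From mathcomp Require Import all_boot all_fingroup.
Set Implicit Arguments. Unset Strict Implicit. Unset Printing Implicit Defensive.
Local Open Scope group_scope.

Definition difference_set (gT : finGroupType) (G : {set gT}) (D : {set gT})
    (v k lam : nat) : Prop :=
  [/\ #|G| = v, D \subset G, #|D| = k &
      forall g, g \in G -> g != 1 ->
        #|[set p in setX D D | p.1 * p.2^-1 == g]| = lam].

Definition normalized (gT : finGroupType) (D : {set gT}) : Prop :=
  \prod_(d in D) d = 1.

(* Write G = L * A with {L, A} = {H, K}, and let a(y) = |D :&: L y| for y in A.
   Counting the differences of D that fall in each coset of L shows that w = a - c has
   autocorrelation 4^s at 1 and 0 elsewhere on A, for c = 1 (L = H) or c = 2^s + 1 (L = K).
   As |A| = 2^t + 1, the power 2^t inverts A, so in F_2[A] the Frobenius power w^(2^t) is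
   the conjugate of w; then w * conj(w) = 0 forces w = 0 mod 2, and halving repeatedly
   gives w = +-2^s at a single point y0 and 0 elsewhere. Projecting the normalization
   prod D = 1 onto A yields y0^(2^s) = 1, whence y0 = 1 as |A| is odd. *)

From mathcomp Require Import all_boot all_fingroup all_solvable all_algebra.
From mathcomp Require Import zify ring.
Set Implicit Arguments. Unset Strict Implicit. Unset Printing Implicit Defensive.
Import GRing.Theory Num.Theory FiniteModule.
Local Open Scope ring_scope.

Lemma expg_coprime_inj (gT : finGroupType) (A : {group gT}) k :
  coprime #|A| k -> {in A &, injective (fun x => x ^+ k)%g}.
Proof. by move/expgK/can_in_inj. Qed.

Lemma expg_coprime_eq1 (gT : finGroupType) (A : {group gT}) x k :
  coprime #|A| k -> x \in A -> (x ^+ k = 1 -> x = 1)%g.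
Proof. by move=> coAk xA xk1; apply: (expg_coprime_inj coAk); rewrite ?expg1n. Qed.

Lemma expg_card_pred (gT : finGroupType) (A : {group gT}) n :
  #|A| = n.+1 -> {in A, forall g, g ^+ n = g^-1}%g.
Proof.
move=> cardA g gA; apply: (mulIg g); rewrite mulVg -expgSr -cardA.
exact: expg_cardG.
Qed.

Lemma coprime_complements (gT : finGroupType) (G A B : {group gT}) :
  A \subset G -> B \subset G -> coprime #|A| #|B| -> (#|A| * #|B|)%N = #|G| ->
  (A :&: B = 1 /\ A * B = G)%g.
Proof.
move=> sAG sBG coAB cardAB; split; first exact: coprime_TIg.
by apply/eqP; rewrite eqEcard mul_subG //= coprime_cardMg // cardAB.
Qed.

Lemma coprime_succ_sqr_succ q : ~~ odd q -> coprime (q + 1) (q * q + 1).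
Proof.
case: q => [|q] // /negbNE odd_q; rewrite -coprime_modr.
rewrite (_ : q.+1 * q.+1 + 1 = q * (q.+1 + 1) + 2)%N; last by ring.
have q_gt0 : (0 < q)%N by case: q odd_q.
rewrite modnMDl modn_small; last lia.
by rewrite coprimen2 addn1 /= negbK.
Qed.

(* i swaps the x ranked below i x with those ranked above, so the sum is a double. *)
Lemma sum_fixfree_involution_char2 (T : finType) (V : nmodType) (S : {pred T})
    (i : T -> T) (F : T -> V) :
  (forall v : V, v + v = 0) -> involutive i -> {in S, forall x, i x \in S} ->
  {in S, forall x, i x != x} -> {in S, forall x, F (i x) = F x} ->
  \sum_(x in S) F x = 0.
Proof.
move=> addvv iK iS i_free Fi.
have iSE x : (i x \in S) = (x \in S).
  by apply/idP/idP => [ixS | /iS //]; rewrite -(iK x) iS.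
pose r (x : T) : nat := enum_rank x.
have r_neq x : x \in S -> r x != r (i x).
  by move=> xS; apply: contraNneq (i_free x xS) => /val_inj/enum_rank_inj <-.
rewrite (bigID (fun x => r x < r (i x))%N) /=.
set S1 := (X in X + _).
suff -> : \sum_(x in S | ~~ (r x < r (i x))%N) F x = S1 by [].
rewrite /S1 (reindex_inj (inv_inj iK)) /=; apply: eq_big => [x | x /andP[ixS _]].
  rewrite iK iSE -leqNgt; case xS: (x \in S) => //=.
  by rewrite leq_eqVlt (negbTE (r_neq x xS)).
by rewrite Fi // -iSE.
Qed.

Lemma card_fibres (T U : finType) (S : {set T}) (f : T -> U) (B : {pred U}) :
  (\sum_(u in B) #|[set x in S | f x == u]| = #|[set x in S | f x \in B]|)%N.
Proof.
rewrite -sum1_card (partition_big f (mem B)) => [|x]; last by rewrite inE => /andP[].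
apply: eq_bigr => u uB; rewrite -sum1_card; apply: eq_bigl => x.
by rewrite !inE; case: eqP => [-> | _]; rewrite ?uB ?andbT ?andbF.
Qed.

Lemma int_sum_sqr_eq1 (T : finType) (S : {pred T}) (u : T -> int) :
  \sum_(y in S) u y ^+ 2 = 1 -> exists2 y0, y0 \in S & {in S, forall y, y != y0 -> u y = 0}.
Proof.
move=> sum1.
have [y0 /andP[y0S uy0] | u0] := pickP [pred y in S | u y != 0]; last first.
  move: sum1; rewrite big1 // => y yS.
  by move/negbT: (u0 y); rewrite /= yS negbK => /eqP ->; rewrite expr0n.
exists y0 => // y yS y_y0.
have sqr_ge0 z : 0 <= u z ^+ 2 by rewrite sqr_ge0.
move: sum1; rewrite (bigD1 y0) //=; set rest := \sum_(i in S | _) _ => sum1.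
have rest0 : rest = 0.
  have : 1 <= u y0 ^+ 2 by rewrite expr2; move: uy0; clear; lia.
  have : 0 <= rest by apply: sumr_ge0.
  lia.
move/eqP: rest0; rewrite psumr_eq0 // => /allP/(_ y).
by rewrite mem_index_enum yS y_y0 sqrf_eq0 => /(_ isT)/implyP/(_ isT)/eqP.
Qed.

Lemma F2_mulrr (x : 'F_2) : x * x = x.
Proof. by case: x => [[|[|n]] //= lt_n2]; apply: val_inj. Qed.

Lemma F2_addrr (x : 'F_2) : x + x = 0.
Proof. exact/addrr_pchar2/pchar_Fp. Qed.

Definition autocorr (gT : finGroupType) (R : pzRingType) (A : {set gT}) (w : gT -> R) z :=
  \sum_(x in A) w x * w (x * z)%g.

Lemma rmorph_autocorr (gT : finGroupType) (R S : pzRingType) (phi : {rmorphism R -> S})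
    (A : {set gT}) (w : gT -> R) z :
  phi (autocorr A w z) = autocorr A (phi \o w) z.
Proof. by rewrite rmorph_sum; apply: eq_bigr => x _; rewrite rmorphM. Qed.

(* Functions on A with convolution model the group algebra R[A]; [regmx f] is the matrix
   of multiplication by f, which makes the algebra laws available through matrices. *)
Section RegularMatrix.

Variables (gT : finGroupType) (A : {group gT}) (R : pzRingType).
Implicit Types f g : gT -> R.

Definition conv f g z := \sum_(y in A) f y * g (y^-1 * z)%g.

Definition regmx f : 'M[R]_#|A| := \matrix_(i, j) f ((enum_val i)^-1 * enum_val j)%g.

Lemma regmxM f g : regmx f *m regmx g = regmx (conv f g).
Proof.
apply/matrixP => i j; rewrite !mxE /conv.
under eq_bigr do rewrite !mxE.
rewrite -(big_enum_val (fun x => f ((enum_val i)^-1 * x)%g * g (x^-1 * enum_val j)%g)).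
rewrite (reindex_inj (mulgI (enum_val i))) /=.
apply: eq_big => [y | y _]; first by rewrite groupMl ?enum_valP.
by rewrite mulKg invMg mulgA.
Qed.

Lemma eq_in_regmx f g : {in A, f =1 g} -> regmx f = regmx g.
Proof.
by move=> fg; apply/matrixP => i j; rewrite !mxE fg // groupM ?groupV ?enum_valP.
Qed.

Lemma regmx_eq0 f : regmx f = 0 -> {in A, forall x, f x = 0}.
Proof.
move=> /matrixP/(_ (enum_rank_in (group1 A) 1%g)) f0 x xA.
by have := f0 (enum_rank_in (group1 A) x); rewrite !mxE !enum_rankK_in // invg1 mul1g.
Qed.

Definition conv_pow2 j f := iter j (fun g => conv g g) f.

Lemma regmx_pow2 j f : regmx f ^+ (2 ^ j) = regmx (conv_pow2 j f).
Proof.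
elim: j => [|j IH]; first by rewrite expr1.
by rewrite expnSr exprM IH expr2 -mulmxE regmxM.
Qed.

End RegularMatrix.

Section SelfConjugateTwo.

Variables (gT : finGroupType) (A : {group gT}) (t : nat).
Hypotheses (abA : abelian A) (oddA : odd #|A|) (t_gt0 : (0 < t)%N).
Hypothesis pow2t_inv : {in A, forall g, g ^+ (2 ^ t) = g^-1}%g.

(* The terms y and y^-1 z^2 of the convolution cancel in pairs, except at y = z. *)
Lemma conv_sqr_F2 (f : gT -> 'F_2) z : z \in A -> conv A f f (z ^+ 2)%g = f z.
Proof.
move=> zA; have z2A : (z ^+ 2 \in A)%g by rewrite groupX.
have sqr_inj : {in A &, injective (fun x => x ^+ 2)%g}.
  by apply: expg_coprime_inj; rewrite coprimen2.
pose i y := if y \in A then (y^-1 * z ^+ 2)%g else y.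
have iA y : y \in A -> i y \in A by move=> yA; rewrite /i yA groupM ?groupV.
have iK : involutive i.
  move=> y; rewrite /i; case: (boolP (y \in A)) => [yA | /negbTE ->] //.
  by rewrite groupM ?groupV // invMg invgK -mulgA (centsP abA y) ?mulKg.
have i_fix y : y \in A -> (i y == y) = (y == z).
  move=> yA; rewrite /i yA; apply/eqP/eqP => [iy | ->]; last by rewrite expg2 mulKg.
  by apply: sqr_inj; rewrite //= -(mulVKg y (z ^+ 2)%g) iy expg2.
have iz : i z = z by apply/eqP; rewrite i_fix.
rewrite /conv (eq_bigr (fun y => f y * f (i y))); last by move=> y yA; rewrite /i yA.
rewrite (bigD1 z) //= iz F2_mulrr.
rewrite (sum_fixfree_involution_char2 (S := [pred y in A | y != z]) F2_addrr iK) ?addr0 //.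
- move=> y /andP[yA yz]; rewrite inE iA //=.
  by apply: contra yz => /eqP iyz; rewrite -(iK y) iyz iz.
- by move=> y /andP[yA yz]; rewrite i_fix.
- by move=> y _; rewrite iK mulrC.
Qed.

Lemma conv_pow2_F2 j (f : gT -> 'F_2) :
  {in A, forall z, conv_pow2 A j f (z ^+ (2 ^ j))%g = f z}.
Proof.
elim: j => [|j IH] z zA; first by rewrite expg1.
by rewrite /conv_pow2 iterS -/(conv_pow2 A j f) expnSr expgM conv_sqr_F2 ?groupX ?IH.
Qed.

Lemma regmx_pow2_F2 j (f g : gT -> 'F_2) :
  {in A, forall z, g (z ^+ (2 ^ j))%g = f z} -> regmx A f ^+ (2 ^ j) = regmx A g.
Proof.
move=> gf; rewrite regmx_pow2; apply: eq_in_regmx => x xA.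
have coA2j : coprime #|A| (2 ^ j) by rewrite coprimeXr // coprimen2.
set y := (x ^+ expg_invn A (2 ^ j))%g.
have <- : (y ^+ (2 ^ j) = x)%g by rewrite /y expgnAC expgK.
by rewrite conv_pow2_F2 ?gf ?groupX.
Qed.

(* With Q the conjugate of P, P^(2^t) = Q and P^(2^(2t)) = P, so P = Q P^k = P Q P^(k-1). *)
Lemma F2_autocorr_eq0 (f : gT -> 'F_2) :
  {in A, forall z, autocorr A f z = 0} -> {in A, forall x, f x = 0}.
Proof.
move=> f_corr; apply: regmx_eq0.
set P := regmx A f; set Q := regmx A (fun y => f y^-1%g).
have PQ : P * Q = 0.
  rewrite -mulmxE regmxM; apply/matrixP => i j; rewrite !mxE /conv.
  set z := ((enum_val i)^-1 * enum_val j)%g.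
  have zA : z \in A by rewrite groupM ?groupV ?enum_valP.
  rewrite -[RHS](f_corr z^-1%g) ?groupV //; apply: eq_bigr => y yA.
  by rewrite invMg invgK (centsP abA z^-1%g) ?groupV.
have PQt : P ^+ (2 ^ t) = Q.
  by apply: regmx_pow2_F2 => y yA; rewrite pow2t_inv ?invgK.
have P2t : P ^+ (2 ^ (t + t)) = P.
  apply: regmx_pow2_F2 => y yA.
  by rewrite expnD expgM pow2t_inv // pow2t_inv ?groupV ?invgK.
have QP : Q * P = P * Q by rewrite -PQt; apply/esym/commrX.
have [k def_k] : exists k, (2 ^ (t + t) - 2 ^ t)%N = k.+1.
  by exists (2 ^ (t + t) - 2 ^ t).-1; rewrite prednK // subn_gt0 ltn_exp2l //; lia.
have le_2t : (2 ^ t <= 2 ^ (t + t))%N by rewrite leq_exp2l //; lia.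
by rewrite -P2t -(subnKC le_2t) exprD PQt def_k exprS mulrA QP PQ mul0r.
Qed.

Lemma autocorr_even (w : gT -> int) :
  {in A, forall z, (2 %| autocorr A w z)%Z} -> {in A, forall x, (2 %| w x)%Z}.
Proof.
have pchar2 := pchar_Fp (isT : prime 2).
move=> corr_even x xA; rewrite (dvdz_pcharf pchar2).
apply/eqP; apply: (F2_autocorr_eq0 (f := intr \o w) _ xA) => z zA.
by apply/eqP; rewrite -(rmorph_autocorr intr) -(dvdz_pcharf pchar2) corr_even.
Qed.

Lemma autocorr_delta_dvd s (w : gT -> int) :
  {in A, forall z, autocorr A w z = (z == 1%g)%:R * (2 ^+ s) ^+ 2} ->
  {in A, forall x, (2 ^+ s %| w x)%Z}.
Proof.
elim: s w => [|s IH] w w_corr x xA; first by rewrite expr0 dvd1z.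
have w_even : {in A, forall y, (2 %| w y)%Z}.
  apply: autocorr_even => z zA; rewrite w_corr //; apply: dvdz_mull.
  by rewrite expr2 exprS -mulrA; apply: dvdz_mulr.
pose w' y := (w y %/ 2)%Z.
have def_w : {in A, forall y, w y = w' y * 2} by move=> y yA; rewrite divzK ?w_even.
suff dvd_w' : (2 ^+ s %| w' x)%Z by rewrite def_w // exprSr; apply: dvdz_mul dvd_w' _.
apply: IH xA => z zA; apply: (@mulfI _ 4) => //.
have -> : 4 * autocorr A w' z = autocorr A w z.
  by rewrite /autocorr mulr_sumr; apply: eq_bigr => y yA; rewrite !def_w ?groupM //; ring.
by rewrite w_corr // [2 ^+ s.+1]exprS; ring.
Qed.

Lemma autocorr_delta_shape s (w : gT -> int) :
  {in A, forall z, autocorr A w z = (z == 1%g)%:R * (2 ^+ s) ^+ 2} ->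
  exists2 y0, y0 \in A & (\sum_(y in A) w y) ^+ 2 = (2 ^+ s) ^+ 2 /\
    {in A, forall x, w x = (x == y0)%:R * \sum_(y in A) w y}.
Proof.
move=> w_corr; pose u y := (w y %/ 2 ^+ s)%Z.
have def_w : {in A, forall y, w y = u y * 2 ^+ s}.
  by move=> y yA; rewrite divzK ?(autocorr_delta_dvd w_corr).
have [y0 y0A u0] : exists2 y0, y0 \in A & {in A, forall y, y != y0 -> u y = 0}.
  apply: int_sum_sqr_eq1; apply: (@mulIf _ ((2 ^+ s) ^+ 2)); first by rewrite !expf_neq0.
  rewrite mul1r mulr_suml (eq_bigr (fun y => w y * w (y * 1)%g)) => [|y yA].
    by rewrite -[LHS]/(autocorr A w 1%g) w_corr ?eqxx ?mul1r.
  by rewrite mulg1 def_w //; ring.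
have w0 y : y \in A -> y != y0 -> w y = 0 by move=> yA yy0; rewrite def_w ?u0 ?mul0r.
have w_delta : {in A, forall x, w x = (x == y0)%:R * \sum_(y in A) w y}.
  move=> x xA; rewrite (bigD1 y0) //= big1 ?addr0 => [|y /andP[]]; last exact: w0.
  by have [-> | /(w0 x xA) ->] := eqVneq x y0; rewrite ?mul1r ?mul0r.
exists y0 => //; split=> //.
have := w_corr 1%g (group1 A); rewrite eqxx mul1r => <-.
rewrite /autocorr [RHS](bigD1 y0) //= [X in _ + X]big1 ?addr0 => [|x /andP[xA xy0]].
  by rewrite mulg1 w_delta // eqxx mul1r expr2.
by rewrite w0 ?mul0r.
Qed.

End SelfConjugateTwo.

Definition diff_count (gT : finGroupType) (D : {set gT}) g :=
  #|[set p in setX D D | (p.1 * p.2^-1)%g == g]|.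

Lemma diff_count1 (gT : finGroupType) (D : {set gT}) : diff_count D 1%g = #|D|.
Proof.
rewrite /diff_count -(card_imset D (can_inj (g := fst) (f := fun d => (d, d)) (fun=> erefl))).
apply: eq_card => -[e d]; rewrite !inE /= -eq_mulgV1.
apply/andP/imsetP => [[/andP[eD dD] /eqP->] | [x xD [-> ->]]]; first by exists d.
by rewrite xD eqxx.
Qed.

Lemma fmod_sum_odd (gT : finGroupType) (G A : {group gT}) (abG : abelian G) :
  A \subset G -> odd #|A| -> \sum_(y in A) fmod abG y = 0.
Proof.
move=> sAG oddA; set S := \sum_(y in A) _.
have S2 : S *+ 2 = 0.
  rewrite mulr2n {1}/S (reindex_inj invg_inj) /= (eq_bigl (mem A)) => [|y]; last first.
    by rewrite groupV.
  by under eq_bigr do rewrite fmodV; rewrite sumrN addNr.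
have SA : S *+ #|A| = 0.
  rewrite /S -sumrMnl big1 // => y yA.
  by rewrite -fmodX ?(subsetP sAG) // expg_cardG // fmod1.
have [k def_k] : exists k, #|A|.+1 = (2 * k)%N.
  by exists (#|A|.+1)./2; rewrite mul2n -[LHS]odd_double_half /= oddA.
have -> : S = S *+ #|A|.+1 by rewrite mulrSr SA add0r.
by rewrite def_k mulrnA S2 mul0rn.
Qed.

Section ComplementCosets.

Local Open Scope group_scope.

Variables (gT : finGroupType) (G L A : {group gT}) (D : {set gT}).
Hypotheses (abG : abelian G) (tiLA : L :&: A = 1) (defG : L * A = G) (sDG : D \subset G).

Let sLG : L \subset G. Proof. by rewrite -defG mulG_subl. Qed.
Let sAG : A \subset G. Proof. by rewrite -defG mulG_subr. Qed.

Lemma remgr_morph : {in G &, {morph remgr L A : x y / x * y}}.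
Proof. by apply: remgrM; [apply/complP | rewrite -sub_abelian_normal]. Qed.

Lemma mem_remgr_complement x : x \in G -> remgr L A x \in A.
Proof. by rewrite -defG; apply: mem_remgr. Qed.

Lemma mem_rcoset_remgr x y : x \in G -> y \in A -> (x \in L :* y) = (remgr L A x == y).
Proof.
move=> xG yA; apply/idP/eqP => [|<-].
  by rewrite mem_rcoset => xyL; rewrite -(mulgKV y x) remgrMid.
by rewrite rcoset_sym; move: xG; rewrite -defG -remgrP => /setIP[].
Qed.

Lemma rcoset_remgr x : x \in G -> L :* x = L :* remgr L A x.
Proof.
by move=> xG; apply/rcoset_eqP; rewrite mem_rcoset_remgr ?mem_remgr_complement.
Qed.

Lemma card_rcoset_remgr y :
  y \in A -> #|D :&: L :* y| = #|[set d in D | remgr L A d == y]|.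
Proof.
move=> yA; apply: eq_card => d; rewrite in_setI inE.
by case dD: (d \in D); rewrite //= mem_rcoset_remgr ?(subsetP sDG).
Qed.

Lemma sum_card_rcoset z : z \in A -> (\sum_(y in A) #|D :&: L :* (y * z)|)%N = #|D|.
Proof.
move=> zA; rewrite (reindex_inj (mulIg z^-1)) /=.
rewrite (eq_bigl (mem A)) => [|y]; last by rewrite groupMr ?groupV.
under eq_bigr => y yA do rewrite mulgKV card_rcoset_remgr //.
rewrite card_fibres; apply: eq_card => d; rewrite inE.
by case dD: (d \in D); rewrite //= mem_remgr_complement ?(subsetP sDG).
Qed.

Lemma sum_card_rcoset_mul z : z \in A ->
  (\sum_(y in A) #|D :&: L :* y| * #|D :&: L :* (y * z)|)%N =
  (\sum_(g in L :* z) diff_count D g)%N.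
Proof.
move=> zA; set S := [set p in setX D D | remgr L A p.1 == remgr L A p.2 * z].
rewrite /diff_count card_fibres.
transitivity (\sum_(y in A) #|[set p in S | remgr L A p.2 == y]|)%N.
  apply: eq_bigr => y yA; rewrite !card_rcoset_remgr ?groupM // mulnC -cardsX.
  apply: eq_card => -[e d]; rewrite !inE /=.
  by have [<- | _] := eqVneq (remgr L A d) y; rewrite ?andbF ?andbT // andbAC.
rewrite (card_fibres _ (fun p => remgr L A p.2)); apply: eq_card => -[e d].
rewrite !inE /= -!andbA; case: (boolP (e \in D)) => //= /(subsetP sDG) eG.
case: (boolP (d \in D)) => //= /(subsetP sDG) dG.
have edG : e * d^-1 \in G by rewrite groupM ?groupV.
have pi_edG : remgr L A (e * d^-1) \in G by rewrite (subsetP sAG) ?mem_remgr_complement.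
rewrite mem_remgr_complement // andbT mem_rcoset_remgr //.
rewrite -{1}(mulgKV d e) [remgr L A (_ * d)]remgr_morph // (centsP abG _ pi_edG).
  by rewrite (inj_eq (mulgI _)).
by rewrite (subsetP sAG) ?mem_remgr_complement.
Qed.

Lemma sum_diff_count_rcoset lam z : z \in A ->
  (forall g, g \in G -> g != 1 -> diff_count D g = lam) ->
  (\sum_(g in L :* z) diff_count D g)%N =
    if z == 1 then (#|D| + (#|L| - 1) * lam)%N else (#|L| * lam)%N.
Proof.
move=> zA lamP; have [-> | z1] := eqVneq z 1.
  rewrite rcoset1 (bigD1 1) //= diff_count1 (eq_bigr (fun=> lam)) => [|g /andP[gL g1]].
    rewrite sum_nat_cond_const (cardsD1 1 L) group1 add1n subn1 /=; congr (_ + _ * _)%N.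
    by apply: eq_card => g; rewrite !inE andbC.
  by rewrite lamP // (subsetP sLG).
rewrite (eq_bigr (fun=> lam)) ?sum_nat_const ?card_rcoset // => g; rewrite mem_rcoset => gzL.
have zG : z \in G by rewrite (subsetP sAG).
apply: lamP; first by rewrite -(mulgKV z g) groupM // (subsetP sLG).
apply: contra z1 => /eqP g1; move: gzL; rewrite g1 mul1g groupV => zL.
have : z \in L :&: A by rewrite inE zL zA.
by rewrite tiLA inE.
Qed.

Lemma autocorr_card_rcoset (lam c : nat) z :
  (forall g, g \in G -> g != 1 -> diff_count D g = lam) -> z \in A ->
  autocorr A (fun y => #|D :&: L :* y|%:Z - c%:Z)%R z =
    ((z == 1%g)%:R * (#|D|%:Z - lam%:Z) + (#|L| * lam + c ^ 2 * #|A|)%N%:Z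
      - (2 * c * #|D|)%N%:Z)%R.
Proof.
move=> lamP zA; set a := fun y => #|D :&: L :* y|.
have sum_a : (\sum_(y in A) a y)%N = #|D|.
  by rewrite -(sum_card_rcoset (group1 A)); apply: eq_bigr => y _; rewrite mulg1.
rewrite /autocorr (eq_bigr (fun y => (a y * a (y * z)%g)%N%:Z
    - (c%:Z * (a (y * z)%g)%:Z + c%:Z * (a y)%:Z) + c%:Z ^+ 2)%R); last first.
  by move=> y _; rewrite PoszM; ring.
rewrite big_split /= sumrB big_split /= -!mulr_sumr sumr_const.
rewrite -!(big_morph Posz PoszD (erefl _)) sum_card_rcoset_mul // sum_card_rcoset // sum_a.
rewrite (sum_diff_count_rcoset zA lamP) -[c%:Z *+ _]mulr_natr natz -mulnn.
rewrite -[in (#|L| * lam)%N](subnK (cardG_gt0 L)).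
by case: (z == 1); rewrite ?mul1r ?mul0r !(PoszD, PoszM); ring.
Qed.

Section CosetCounts.

Variables (t s lam c : nat).
Hypotheses (t_gt0 : (0 < t)%N) (cardA : #|A| = (2 ^ t + 1)%N).
Hypothesis lamP : forall g, g \in G -> g != 1 -> diff_count D g = lam.
Hypothesis cardD : #|D| = (lam + 2 ^ (2 * s))%N.
Hypothesis balance : (#|L| * lam + c ^ 2 * #|A| = 2 * c * #|D|)%N.
Hypothesis prodD : \prod_(d in D) d = 1.

Let oddA : odd #|A|.
Proof. by rewrite cardA addn1 /= -(subnKC t_gt0) expnS oddM. Qed.

Let pow2t_inv : {in A, forall g, g ^+ (2 ^ t) = g^-1}.
Proof. by apply: expg_card_pred; rewrite cardA addn1. Qed.

Local Notation dev := (#|D|%:Z - (c * #|A|)%N%:Z)%R.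

(* The balance condition is what makes the autocorrelation of a - c vanish off 1. *)
Lemma card_rcoset_concentrated :
  exists2 y0, y0 \in A & (dev ^+ 2 = (2 ^+ s) ^+ 2)%R /\
    forall y, y \in A -> #|D :&: L :* y|%:Z = (c%:Z + (y == y0)%:R * dev)%R.
Proof.
pose w y := (#|D :&: L :* y|%:Z - c%:Z)%R.
have sum_w : (\sum_(y in A) w y)%R = dev.
  rewrite sumrB sumr_const -(big_morph Posz PoszD (erefl _)).
  have := sum_card_rcoset (group1 A); under eq_bigr do rewrite mulg1.
  by move=> ->; rewrite -[c%:Z *+ _]mulr_natr [#|A|%:R]natz PoszM.
have [|y0 y0A] := autocorr_delta_shape (abelianS sAG abG) oddA t_gt0 pow2t_inv (w := w) (s := s).
  move=> z zA; rewrite (autocorr_card_rcoset c lamP zA) balance addrK.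
  by rewrite cardD PoszD addrAC subrr add0r -natz natrX -exprM mulnC.
rewrite sum_w => -[dev2 w_y0]; exists y0 => //; split=> // y yA.
by rewrite -(w_y0 y yA) /w addrC subrK.
Qed.

Lemma normalized_rcoset_exp y0 :
  y0 \in A -> (forall y, y \in A -> y != y0 -> #|D :&: L :* y| = c) ->
  y0 ^+ #|D :&: L :* y0| = y0 ^+ c.
Proof.
move=> y0A card_c.
have piG x : x \in G -> remgr L A x \in G.
  by move=> xG; rewrite (subsetP sAG) ?mem_remgr_complement.
(* [fmod abG] views G as an additive group, where the product over D becomes a sum. *)
pose phi x := fmod abG (remgr L A x).
have phiM : {in G &, {morph phi : x y / x * y >-> (x + y)%R}}.
  by move=> x y xG yG; rewrite /phi remgr_morph // fmodM ?piG.
have sum_phi : (\sum_(d in D) phi d = 0)%R.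
  have phi1 : phi 1 = 0%R by rewrite /phi remgr1 ?fmod1.
  rewrite -(big_morph_in (mem G) phi (@groupM _ G) (group1 G) phiM phi1) ?prodD //.
  exact/subsetP.
have : (\sum_(y in A) fmod abG y *+ #|D :&: L :* y| = \sum_(d in D) phi d)%R.
  rewrite [RHS](partition_big (remgr L A) (fun y => y \in A)) => [|d dD]; last first.
    by rewrite mem_remgr_complement ?(subsetP sDG).
  apply: eq_bigr => y yA; rewrite card_rcoset_remgr // -sumr_const.
  by apply: eq_big => [d | d]; rewrite inE // => /andP[_ /eqP <-].
rewrite sum_phi (bigD1 y0) //= (eq_bigr (fun y => fmod abG y *+ c)%R) => [|y /andP[yA]];
  last by move/(card_c y yA) ->.
have sum_y0 : (\sum_(y in A | y != y0) fmod abG y = - fmod abG y0)%R.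
  by apply/eqP; rewrite -addr_eq0 addrC -(bigD1 y0) //= fmod_sum_odd.
have y0G : y0 \in G by rewrite (subsetP sAG).
rewrite sumrMnl sum_y0 mulNrn => /eqP; rewrite subr_eq0 -!fmodX // => /eqP.
by apply: (can_in_inj (fmodK abG)); rewrite groupX.
Qed.

Lemma card_rcoset_normalized :
  #|D :&: L|%:Z = (c%:Z + dev)%R /\
  forall x, x \in G -> x \notin L -> #|D :&: L :* x| = c.
Proof.
have [y0 y0A [dev2 card_y]] := card_rcoset_concentrated.
have card_c y : y \in A -> y != y0 -> #|D :&: L :* y| = c.
  by move=> yA /negbTE yy0; move: (card_y y yA); rewrite yy0 mul0r addr0; case.
have : y0 ^+ (2 ^ s)%N = 1.
  have := normalized_rcoset_exp y0A card_c; move: (card_y y0 y0A).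
  rewrite eqxx mul1r; set a0 := #|_|.
  have [-> | ->] : dev = (2 ^ s)%N%:Z \/ dev = (- (2 ^ s)%N%:Z)%R.
    by apply/pred2P; rewrite -eqf_sqr dev2 -natz natrX.
  - by rewrite -PoszD => -[->]; rewrite expgD -{2}(mulg1 (y0 ^+ c)) => /mulgI.
  - move=> a0E; have -> : c = (a0 + 2 ^ s)%N by lia.
    by rewrite expgD -{1}(mulg1 (y0 ^+ a0)) => /mulgI/esym.
move/(expg_coprime_eq1 _ y0A); rewrite coprimeXr ?coprimen2 // => /(_ isT) y0_1.
have card_x x : x \in G -> #|D :&: L :* x|%:Z = (c%:Z + (x \in L)%:R * dev)%R.
  move=> xG; rewrite rcoset_remgr // card_y ?mem_remgr_complement // y0_1.
  by rewrite -(mem_rcoset_remgr xG (group1 A)) rcoset1.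
split=> [|x xG /negbTE xL]; first by rewrite -{1}(rcoset1 L) card_x ?group1 ?mul1r.
by move: (card_x x xG); rewrite xL mul0r addr0; case.
Qed.

End CosetCounts.

End ComplementCosets.

Local Close Scope ring_scope.
Local Open Scope group_scope.

Theorem corollary5p2 (s : nat) (gT : finGroupType) (G H K : {group gT})
    (D : {set gT}) :
  1 <= s ->
  abelian G ->
  difference_set G D ((2 ^ s + 1) * (2 ^ (2 * s) + 1))%N
                     (2 ^ (2 * s) + 2 ^ s + 1)%N (2 ^ s + 1)%N ->
  normalized D ->
  H \subset G -> #|H| = (2 ^ s + 1)%N ->
  K \subset G -> #|K| = (2 ^ (2 * s) + 1)%N ->
  [/\ H \subset D,
      (forall x, x \in G -> x \notin H -> #|D :&: (H :* x)| = 1%N),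
      D :&: K = [set 1] &
      (forall x, x \in G -> x \notin K -> #|D :&: (K :* x)| = (2 ^ s + 1)%N)].
Proof.
move=> s_gt0 abG [cardG sDG cardD lamP] prodD sHG cardH sKG cardK.
have q2 : (2 ^ (2 * s) = 2 ^ s * 2 ^ s)%N by rewrite mulnC expnM -mulnn.
have cardD' : #|D| = (2 ^ s + 1 + 2 ^ (2 * s))%N by rewrite cardD; lia.
have coHK : coprime #|H| #|K|.
  by rewrite cardH cardK q2 coprime_succ_sqr_succ // -(subnKC s_gt0) expnS oddM.
have cardHK : (#|H| * #|K|)%N = #|G| by rewrite cardH cardK cardG.
have [tiHK defHK] := coprime_complements sHG sKG coHK cardHK.
have [tiKH defKH] : K :&: H = 1 /\ K * H = G.
  by apply: coprime_complements; rewrite // 1?coprime_sym // mulnC.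
have balanceH : (#|H| * (2 ^ s + 1) + 1 ^ 2 * #|K| = 2 * 1 * #|D|)%N.
  by rewrite cardH cardK cardD q2; nia.
have balanceK :
    (#|K| * (2 ^ s + 1) + (2 ^ s + 1) ^ 2 * #|H| = 2 * (2 ^ s + 1) * #|D|)%N.
  by rewrite cardH cardK cardD q2; nia.
have s2_gt0 : 0 < 2 * s by lia.
have [cardDH cosetsH] :=
  card_rcoset_normalized abG tiHK defHK sDG s2_gt0 cardK lamP cardD' balanceH prodD.
have [cardDK cosetsK] :=
  card_rcoset_normalized abG tiKH defKH sDG s_gt0 cardH lamP cardD' balanceK prodD.
have HD : H \subset D.
  have cardDH' : #|D :&: H| = #|H|.
    by move: cardDH; rewrite cardH cardK cardD q2; move: (2 ^ s)%N => q; lia.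
  by apply/setIidPr/eqP; rewrite eqEcard subsetIr cardDH' /=.
split=> //; apply/eqP; rewrite eq_sym eqEcard sub1set inE (subsetP HD) ?group1 // cards1.
by move: cardDK; rewrite cardH cardD q2; move: (2 ^ s)%N => q; nia.
Qed.
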